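(* For $a,b\in\mathbb{C}$ let $X_{a,b}\subset\mathbb{P}^1_x\times\mathbb{P}^1_y\times\mathbb{P}^1_z$ be the surface defined by \[F=Q_a(x_0,x_1,y_0,y_1)z_0^2+(x_0^2y_0^2+x_1^2y_1^2)z_0z_1+Q_b(x_0,x_1,y_0,y_1)z_1^2,\] where $Q_c=x_0^2y_1^2+c\,x_0x_1y_0y_1+x_1^2y_0^2$. Then $X_{a,b}$ is smooth if and only if \[(a^2-4)(b^2-4)(ab-2b-2a+3)(ab+2b+2a+3)(b^2-2ab+a^2+4)\neq0.\]
   Context: $(x_0:x_1),(y_0:y_1),(z_0:z_1)$ are homogeneous coordinates on $\mathbb{P}^1_x,\mathbb{P}^1_y,\mathbb{P}^1_z$. *)

From HB Require Import structures.
From mathcomp Require Import all_boot all_order all_algebra.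
From mathcomp Require Import mpoly.
From mathcomp Require Import complex.
From mathcomp Require Import Rstruct.
From Stdlib Require Import Reals.

Set Implicit Arguments.
Unset Strict Implicit.
Unset Printing Implicit Defensive.

Import Order.TTheory GRing.Theory Num.Theory.
Local Open Scope ring_scope.

Definition CC : Type := complex R.

Definition vx0 : {mpoly CC[6]} := 'X_(inord 0).
Definition vx1 : {mpoly CC[6]} := 'X_(inord 1).
Definition vy0 : {mpoly CC[6]} := 'X_(inord 2).
Definition vy1 : {mpoly CC[6]} := 'X_(inord 3).
Definition vz0 : {mpoly CC[6]} := 'X_(inord 4).
Definition vz1 : {mpoly CC[6]} := 'X_(inord 5).

Definition Qc (c : CC) : {mpoly CC[6]} :=
  vx0 ^+ 2 * vy1 ^+ 2 + c%:MP * vx0 * vx1 * vy0 * vy1 + vx1 ^+ 2 * vy0 ^+ 2.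

Definition Fab (a b : CC) : {mpoly CC[6]} :=
  Qc a * vz0 ^+ 2 + (vx0 ^+ 2 * vy0 ^+ 2 + vx1 ^+ 2 * vy1 ^+ 2) * vz0 * vz1
  + Qc b * vz1 ^+ 2.

(* A point of P^1_x x P^1_y x P^1_z, given by homogeneous coordinates
   v = (x0,x1,y0,y1,z0,z1) with (x0,x1), (y0,y1), (z0,z1) each nonzero. *)
Definition proj_point (v : 'I_6 -> CC) : Prop :=
  (v (inord 0) != 0 \/ v (inord 1) != 0) /\
  (v (inord 2) != 0 \/ v (inord 3) != 0) /\
  (v (inord 4) != 0 \/ v (inord 5) != 0).

(* Singular point of the hypersurface {F = 0} in P^1 x P^1 x P^1
   (Jacobian criterion): F and all its partial derivatives vanish. *)
Definition singular_point (F : {mpoly CC[6]}) (v : 'I_6 -> CC) : Prop :=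
  proj_point v /\ F.@[v] = 0 /\ (forall i : 'I_6, (mderiv i F).@[v] = 0).

Definition smooth_hypersurface (F : {mpoly CC[6]}) : Prop :=
  ~ (exists v : 'I_6 -> CC, singular_point F v).

From HB Require Import structures.
From mathcomp Require Import all_boot all_order all_algebra.
From mathcomp Require Import mpoly complex Rstruct.
From mathcomp Require Import ring.

(* A point is singular iff the six partial derivatives of F vanish there (F
   itself then vanishes by Euler's relation). This system is invariant under
   exchanging the x- and y-factors, under swapping the indices 0 and 1 in both,
   under z0 <-> z1 together with a <-> b, and under x1 |-> -x1 together with
   (a, b) |-> (-a, -b). Up to these symmetries, x0 = 0 forces z0 = z1 = 0, so
   x0, x1, y0, y1 are all nonzero. If z0 = 0 the x-partials give b^2 = 4.
   Otherwise, in the chart x0 = y0 = z0 = 1, the partials in x0 and y0 give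
   (1 + Z^2)(Y - X)(Y + X) = 0, and the three cases yield the three remaining
   factors. Conversely every factor comes with an explicit singular point. *)

Set Implicit Arguments.
Unset Strict Implicit.
Unset Printing Implicit Defensive.

Import GRing.Theory Num.Theory.
Local Open Scope ring_scope.

Lemma mderivXU (n : nat) (R : nzRingType) (i j : 'I_n) :
  ('X_j : {mpoly R[n]})^`M(i) = (i == j)%:R.
Proof.
rewrite mderivX mnm1E eq_sym; case: eqP => [->|_]; last by rewrite scale0r.
have -> : (U_(j) - U_(j) = 0)%MM by apply/mnmP => k; rewrite mnmBE subnn mnm0E.
by rewrite scale1r mpolyX0.
Qed.

(* Partial derivatives of [Fab] are evaluated through this syntax of polynomial
   expressions: rewriting [mderivD]/[mderivM] directly under [mderiv] stalls on
   the nested derivatives it produces. *)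
Section PolyExpr.
Variables (n : nat) (R : comNzRingType).

Inductive pexpr :=
  PVar of nat | PConst of R | PAdd of pexpr & pexpr | PMul of pexpr & pexpr.

Fixpoint pexpr_wf (e : pexpr) : bool :=
  match e with
  | PVar k => (k <= n)%N
  | PConst _ => true
  | PAdd e1 e2 | PMul e1 e2 => pexpr_wf e1 && pexpr_wf e2
  end.

Fixpoint pexpr_poly (e : pexpr) : {mpoly R[n.+1]} :=
  match e with
  | PVar k => 'X_(inord k)
  | PConst c => c%:MP
  | PAdd e1 e2 => pexpr_poly e1 + pexpr_poly e2
  | PMul e1 e2 => pexpr_poly e1 * pexpr_poly e2
  end.

Variable v : 'I_n.+1 -> R.

Fixpoint pexpr_eval (e : pexpr) : R :=
  match e with
  | PVar k => v (inord k)
  | PConst c => c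
  | PAdd e1 e2 => pexpr_eval e1 + pexpr_eval e2
  | PMul e1 e2 => pexpr_eval e1 * pexpr_eval e2
  end.

Fixpoint pexpr_deriv (i : nat) (e : pexpr) : R :=
  match e with
  | PVar k => (i == k)%:R
  | PConst _ => 0
  | PAdd e1 e2 => pexpr_deriv i e1 + pexpr_deriv i e2
  | PMul e1 e2 => pexpr_deriv i e1 * pexpr_eval e2 + pexpr_eval e1 * pexpr_deriv i e2
  end.

Lemma pexpr_evalE (e : pexpr) : (pexpr_poly e).@[v] = pexpr_eval e.
Proof.
elim: e => [k|c|e1 IH1 e2 IH2|e1 IH1 e2 IH2] /=.
- exact: mevalXU.
- exact: mevalC.
- by rewrite mevalD IH1 IH2.
- by rewrite mevalM IH1 IH2.
Qed.

Lemma pexpr_derivE (i : nat) (e : pexpr) : (i <= n)%N -> pexpr_wf e ->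
  ((pexpr_poly e)^`M(inord i)).@[v] = pexpr_deriv i e.
Proof.
move=> lein; elim: e => [k|c|e1 IH1 e2 IH2|e1 IH1 e2 IH2] /=.
- move=> lekn; rewrite mderivXU -val_eqE /= !inordK //.
  by case: (i == k); rewrite ?meval1 ?meval0.
- by rewrite mderivC meval0.
- by case/andP=> wf1 wf2; rewrite mderivD mevalD IH1 // IH2.
- by case/andP=> wf1 wf2; rewrite mderivM mevalD !mevalM !pexpr_evalE IH1 // IH2.
Qed.

End PolyExpr.

Arguments PVar {R}.
Arguments PConst {R}.
Arguments PAdd {R}.
Arguments PMul {R}.
Arguments pexpr_poly n {R}.
Arguments pexpr_eval {n R}.
Arguments pexpr_deriv {n R}.

(* The cofactors passed to these lemmas are ideal-membership certificates. *)
Section IdealMembership.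
Variable R : pzSemiRingType.

Lemma comb1_eq0 (c1 : R) {x g1 : R} : g1 = 0 -> x = c1 * g1 -> x = 0.
Proof. by move=> -> ->; rewrite mulr0. Qed.

Lemma comb2_eq0 (c1 c2 : R) {x g1 g2 : R} :
  g1 = 0 -> g2 = 0 -> x = c1 * g1 + c2 * g2 -> x = 0.
Proof. by move=> -> -> ->; rewrite !mulr0 addr0. Qed.

Lemma comb3_eq0 (c1 c2 c3 : R) {x g1 g2 g3 : R} :
  g1 = 0 -> g2 = 0 -> g3 = 0 -> x = c1 * g1 + c2 * g2 + c3 * g3 -> x = 0.
Proof. by move=> -> -> -> ->; rewrite !mulr0 !addr0. Qed.

End IdealMembership.

Arguments comb1_eq0 {R} c1 {x g1}.
Arguments comb2_eq0 {R} c1 c2 {x g1 g2}.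
Arguments comb3_eq0 {R} c1 c2 c3 {x g1 g2 g3}.

Lemma mulfI0 (R : idomainType) (c x : R) : c != 0 -> c * x = 0 -> x = 0.
Proof. by move=> nzc /eqP; rewrite mulf_eq0 (negbTE nzc) => /eqP. Qed.

Lemma two_neq0 : (2 : CC) != 0.
Proof. by rewrite pnatr_eq0. Qed.

Ltac neq0 := by rewrite ?mulf_neq0 ?expf_neq0 ?oppr_eq0 ?two_neq0.
Ltac field_side := repeat (apply/andP; split); try assumption; try neq0.

Definition Qc_pexpr (c : CC) : pexpr CC :=
  PAdd (PAdd (PMul (PMul (PVar 0) (PVar 0)) (PMul (PVar 3) (PVar 3)))
             (PMul (PMul (PMul (PMul (PConst c) (PVar 0)) (PVar 1)) (PVar 2)) (PVar 3)))
       (PMul (PMul (PVar 1) (PVar 1)) (PMul (PVar 2) (PVar 2))).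

Definition Fab_pexpr (a b : CC) : pexpr CC :=
  PAdd (PAdd (PMul (Qc_pexpr a) (PMul (PVar 4) (PVar 4)))
             (PMul (PMul (PAdd (PMul (PMul (PVar 0) (PVar 0)) (PMul (PVar 2) (PVar 2)))
                               (PMul (PMul (PVar 1) (PVar 1)) (PMul (PVar 3) (PVar 3))))
                         (PVar 4)) (PVar 5)))
       (PMul (Qc_pexpr b) (PMul (PVar 5) (PVar 5))).

Lemma Fab_pexprE (a b : CC) : Fab a b = pexpr_poly 5 (Fab_pexpr a b).
Proof. by rewrite /Fab /Qc /vx0 /vx1 /vy0 /vy1 /vz0 /vz1 !expr2. Qed.

Section Partials.
Variables (a b x0 x1 y0 y1 z0 z1 : CC).

Definition Fx0 := 2*x0*(y1^+2*(z0^+2+z1^+2) + y0^+2*(z0*z1)) + x1*y0*y1*(a*z0^+2+b*z1^+2).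
Definition Fx1 := 2*x1*(y0^+2*(z0^+2+z1^+2) + y1^+2*(z0*z1)) + x0*y0*y1*(a*z0^+2+b*z1^+2).
Definition Fy0 := 2*y0*(x1^+2*(z0^+2+z1^+2) + x0^+2*(z0*z1)) + x0*x1*y1*(a*z0^+2+b*z1^+2).
Definition Fy1 := 2*y1*(x0^+2*(z0^+2+z1^+2) + x1^+2*(z0*z1)) + x0*x1*y0*(a*z0^+2+b*z1^+2).
Definition Fz0 := 2*(x0^+2*y1^+2 + a*x0*x1*y0*y1 + x1^+2*y0^+2)*z0 + (x0^+2*y0^+2 + x1^+2*y1^+2)*z1.
Definition Fz1 := (x0^+2*y0^+2 + x1^+2*y1^+2)*z0 + 2*(x0^+2*y1^+2 + b*x0*x1*y0*y1 + x1^+2*y0^+2)*z1.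

Definition critical : Prop :=
  Fx0 = 0 /\ Fx1 = 0 /\ Fy0 = 0 /\ Fy1 = 0 /\ Fz0 = 0 /\ Fz1 = 0.

End Partials.

Ltac partials_ring := rewrite /Fx0 /Fx1 /Fy0 /Fy1 /Fz0 /Fz1; ring.

Section SingularPoints.
Variables (a b : CC) (v : 'I_6 -> CC).
Local Notation x0 := (v (inord 0)).
Local Notation x1 := (v (inord 1)).
Local Notation y0 := (v (inord 2)).
Local Notation y1 := (v (inord 3)).
Local Notation z0 := (v (inord 4)).
Local Notation z1 := (v (inord 5)).

Lemma Fab_euler :
  (Fab a b).@[v] * 2 = z0 * Fz0 a x0 x1 y0 y1 z0 z1 + z1 * Fz1 b x0 x1 y0 y1 z0 z1.
Proof. by rewrite Fab_pexprE pexpr_evalE /= /Fz0 /Fz1; ring. Qed.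

Lemma Fab_jacobian_eq0 :
  (forall i : 'I_6, ((Fab a b)^`M(i)).@[v] = 0) <-> critical a b x0 x1 y0 y1 z0 z1.
Proof.
have dF k : (k <= 5)%N -> ((Fab a b)^`M(inord k)).@[v] = pexpr_deriv v k (Fab_pexpr a b).
  by move=> lek5; rewrite Fab_pexprE pexpr_derivE.
have dFx0 : ((Fab a b)^`M(inord 0)).@[v] = Fx0 a b x0 x1 y0 y1 z0 z1 by rewrite dF //= /Fx0; ring.
have dFx1 : ((Fab a b)^`M(inord 1)).@[v] = Fx1 a b x0 x1 y0 y1 z0 z1 by rewrite dF //= /Fx1; ring.
have dFy0 : ((Fab a b)^`M(inord 2)).@[v] = Fy0 a b x0 x1 y0 y1 z0 z1 by rewrite dF //= /Fy0; ring.
have dFy1 : ((Fab a b)^`M(inord 3)).@[v] = Fy1 a b x0 x1 y0 y1 z0 z1 by rewrite dF //= /Fy1; ring.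
have dFz0 : ((Fab a b)^`M(inord 4)).@[v] = Fz0 a x0 x1 y0 y1 z0 z1 by rewrite dF //= /Fz0; ring.
have dFz1 : ((Fab a b)^`M(inord 5)).@[v] = Fz1 b x0 x1 y0 y1 z0 z1 by rewrite dF //= /Fz1; ring.
split=> [dF0 | crit i].
  by rewrite /critical -dFx0 -dFx1 -dFy0 -dFy1 -dFz0 -dFz1 !dF0.
case: crit => [h1 [h2 [h3 [h4 [h5 h6]]]]].
rewrite -(inord_val i); case: i => [[|[|[|[|[|[|k]]]]]] ltk6] //=.
- by rewrite dFx0.
- by rewrite dFx1.
- by rewrite dFy0.
- by rewrite dFy1.
- by rewrite dFz0.
- by rewrite dFz1.
Qed.

Lemma singular_point_FabE :
  singular_point (Fab a b) v <-> proj_point v /\ critical a b x0 x1 y0 y1 z0 z1.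
Proof.
rewrite /singular_point Fab_jacobian_eq0; split=> [[? [_ ?]] // | [? crit]].
split=> //; split=> //.
have [_ [_ [_ [_ [hz0 hz1]]]]] := crit.
have /eqP := Fab_euler; rewrite hz0 hz1 !mulr0 addr0 mulf_eq0 pnatr_eq0 orbF.
by move/eqP.
Qed.

End SingularPoints.

Section Symmetries.
Variables (a b x0 x1 y0 y1 z0 z1 : CC).
Hypothesis crit : critical a b x0 x1 y0 y1 z0 z1.

Lemma critical_swapxy : critical a b y0 y1 x0 x1 z0 z1.
Proof.
case: crit => [h1 [h2 [h3 [h4 [h5 h6]]]]].
by do !split; [rewrite -h3|rewrite -h4|rewrite -h1|rewrite -h2|rewrite -h5|rewrite -h6];
  partials_ring.
Qed.

Lemma critical_swap01 : critical a b x1 x0 y1 y0 z0 z1.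
Proof.
case: crit => [h1 [h2 [h3 [h4 [h5 h6]]]]].
by do !split; [rewrite -h2|rewrite -h1|rewrite -h4|rewrite -h3|rewrite -h5|rewrite -h6];
  partials_ring.
Qed.

Lemma critical_swapz : critical b a x0 x1 y0 y1 z1 z0.
Proof.
case: crit => [h1 [h2 [h3 [h4 [h5 h6]]]]].
by do !split; [rewrite -h1|rewrite -h2|rewrite -h3|rewrite -h4|rewrite -h6|rewrite -h5];
  partials_ring.
Qed.

Lemma critical_oppx1 : critical (- a) (- b) x0 (- x1) y0 y1 z0 z1.
Proof.
case: crit => [h1 [h2 [h3 [h4 [h5 h6]]]]].
by do !split; [rewrite -h1|rewrite -[RHS]oppr0 -h2|rewrite -h3|rewrite -h4|rewrite -h5|rewrite -h6];
  partials_ring.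
Qed.

End Symmetries.

(* With x0 = 0 the partials in y0, y1, z0, z1 leave only the z-coordinates
   free, and they force z0 = z1 = 0. *)
Lemma critical_x0_neq0 a b x0 x1 y0 y1 z0 z1 :
  (x0 != 0 \/ x1 != 0) -> (y0 != 0 \/ y1 != 0) -> (z0 != 0 \/ z1 != 0) ->
  critical a b x0 x1 y0 y1 z0 z1 -> x0 != 0.
Proof.
move=> hx hy hz [_ [_ [h3 [h4 [h5 h6]]]]]; apply/negP => /eqP x0E; subst x0.
have nzx1 : x1 != 0 by case: hx; rewrite ?eqxx.
suff [z0E z1E] : z0 = 0 /\ z1 = 0 by move: hz; rewrite z0E z1E eqxx; case.
have e3 : y0 * (z0^+2 + z1^+2) = 0.
  by apply: (@mulfI0 _ (2*x1^+2)); [neq0 | rewrite -h3; partials_ring].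
have e4 : y1 * (z0 * z1) = 0.
  by apply: (@mulfI0 _ (2*x1^+2)); [neq0 | rewrite -h4; partials_ring].
have e5 : 2*y0^+2*z0 + y1^+2*z1 = 0.
  by apply: (@mulfI0 _ (x1^+2)); [neq0 | rewrite -h5; partials_ring].
have e6 : y1^+2*z0 + 2*y0^+2*z1 = 0.
  by apply: (@mulfI0 _ (x1^+2)); [neq0 | rewrite -h6; partials_ring].
have [y0E|nzy0] := eqVneq y0 0.
  subst y0; have nzy1 : y1 != 0 by case: hy; rewrite ?eqxx.
  by split; apply: (@mulfI0 _ (y1^+2)); [neq0 | rewrite -e6; ring | neq0 | rewrite -e5; ring].
have [y1E|nzy1] := eqVneq y1 0.
  subst y1.
  by split; apply: (@mulfI0 _ (2*y0^+2)); [neq0 | rewrite -e5; ring | neq0 | rewrite -e6; ring].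
have sq0 : z0^+2 + z1^+2 = 0 := mulfI0 nzy0 e3.
have /eqP := mulfI0 nzy1 e4; rewrite mulf_eq0 => /orP [/eqP z0E | /eqP z1E].
  by move/eqP: sq0; rewrite z0E expr0n add0r expf_eq0 => /andP [_ /eqP].
by move/eqP: sq0; rewrite z1E expr0n addr0 expf_eq0 => /andP [_ /eqP].
Qed.

Lemma critical_z0_eq0 a b x0 x1 y0 y1 z1 :
  x0 != 0 -> y0 != 0 -> y1 != 0 -> z1 != 0 ->
  critical a b x0 x1 y0 y1 0 z1 -> b^+2 - 4 = 0.
Proof.
move=> nzx0 nzy0 nzy1 nzz1 [h1 [h2 _]].
apply: (@mulfI0 _ (x0*y1^+2*y0*z1^+2)); first neq0.
by apply: (comb2_eq0 (b*y1) (-2*y0) h2 h1); partials_ring.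
Qed.

Lemma critical_dehomogenize a b x0 x1 y0 y1 z0 z1 :
  x0 != 0 -> y0 != 0 -> z0 != 0 ->
  critical a b x0 x1 y0 y1 z0 z1 -> critical a b 1 (x1/x0) 1 (y1/y0) 1 (z1/z0).
Proof.
move=> nzx0 nzy0 nzz0 [h1 [h2 [h3 [h4 [h5 h6]]]]].
split; first by apply: (comb1_eq0 (x0*y0^+2*z0^+2)^-1 h1); rewrite /Fx0; field; field_side.
split; first by apply: (comb1_eq0 (x0*y0^+2*z0^+2)^-1 h2); rewrite /Fx1; field; field_side.
split; first by apply: (comb1_eq0 (x0^+2*y0*z0^+2)^-1 h3); rewrite /Fy0; field; field_side.
split; first by apply: (comb1_eq0 (x0^+2*y0*z0^+2)^-1 h4); rewrite /Fy1; field; field_side.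
split; first by apply: (comb1_eq0 (x0^+2*y0^+2*z0)^-1 h5); rewrite /Fz0; field; field_side.
by apply: (comb1_eq0 (x0^+2*y0^+2*z0)^-1 h6); rewrite /Fz1; field; field_side.
Qed.

Lemma critical_affine_Z2 a b X Y Z : Y != 0 -> Z != 0 -> 1 + Z^+2 = 0 ->
  critical a b 1 X 1 Y 1 Z -> b^+2 - 2*a*b + a^+2 + 4 = 0.
Proof.
move=> nzY nzZ hZ [h1 [h2 _]].
have hK : 2*X*Y*Z + (a + b*Z^+2) = 0.
  by apply: (mulfI0 nzY); apply: (comb2_eq0 1 (-2*X) h2 hZ); partials_ring.
have hXY : (X*Y)^+2 - 1 = 0.
  apply: (@mulfI0 _ (-2*Z)); first neq0.
  by apply: (comb3_eq0 1 (-2*Y^+2) (-(X*Y)) h1 hZ hK); partials_ring.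
by apply: (comb3_eq0 (a + b*Z^+2 - 2*(X*Y)*Z) (4*Z^+2)
  (4 - 2*(a + b*Z^+2)*b + b^+2*(1 + Z^+2)) hK hXY hZ); ring.
Qed.

Lemma critical_affine_diag a b X Z : X != 0 -> Z != 0 ->
  critical a b 1 X 1 X 1 Z -> a*b + 2*b + 2*a + 3 = 0.
Proof.
move=> nzX nzZ [h1 [h2 [_ [_ [h5 h6]]]]].
have hX1 : 2*(1 + Z^+2) + 2*X^+2*Z + (a + b*Z^+2) = 0.
  by apply: (mulfI0 nzX); apply: (comb1_eq0 1 h2); partials_ring.
have hX4 : (X^+2)^+2 - 1 = 0.
  apply: (@mulfI0 _ (-2*Z)); first neq0.
  by apply: (comb2_eq0 1 (-X^+2) h1 hX1); partials_ring.
have hZ : Z + X^+2*(2 + a) = 0.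
  apply: (@mulfI0 _ 2); first exact: two_neq0.
  by apply: (comb2_eq0 1 (-Z) h5 hX4); partials_ring.
apply: (@mulfI0 _ 2); first exact: two_neq0.
by apply: (comb3_eq0 (-1) (1 - 2*(2 + a)*(2 + b)) (2*X^+2*(2 + b)) h6 hX4 hZ); partials_ring.
Qed.

Lemma critical_affine a b X Y Z : X != 0 -> Y != 0 -> Z != 0 ->
  critical a b 1 X 1 Y 1 Z ->
  [\/ b^+2 - 2*a*b + a^+2 + 4 = 0, a*b + 2*b + 2*a + 3 = 0 | a*b - 2*b - 2*a + 3 = 0].
Proof.
move=> nzX nzY nzZ crit.
have /eqP : 2*(1 + Z^+2)*((Y - X)*(Y + X)) = 0.
  by case: crit => [h1 [_ [h3 _]]]; apply: (comb2_eq0 1 (-1) h1 h3); partials_ring.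
rewrite !mulf_eq0 (negbTE two_neq0) /= => /or3P [/eqP hZ | | ].
- by apply: Or31; exact: critical_affine_Z2 nzY nzZ hZ crit.
- by rewrite subr_eq0 => /eqP YE; subst Y; apply: Or32; exact: critical_affine_diag nzX nzZ crit.
- rewrite addr_eq0 => /eqP YE; subst Y; apply: Or33.
  by have := critical_affine_diag nzY nzZ (critical_oppx1 crit) => <-; ring.
Qed.

Definition disc (a b : CC) : CC :=
  (a ^+ 2 - 4) * (b ^+ 2 - 4) * (a * b - 2 * b - 2 * a + 3)
    * (a * b + 2 * b + 2 * a + 3) * (b ^+ 2 - 2 * a * b + a ^+ 2 + 4).

Lemma critical_disc_eq0 a b x0 x1 y0 y1 z0 z1 :
  (x0 != 0 \/ x1 != 0) -> (y0 != 0 \/ y1 != 0) -> (z0 != 0 \/ z1 != 0) ->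
  critical a b x0 x1 y0 y1 z0 z1 -> disc a b = 0.
Proof.
move=> hx hy hz crit.
have hx' := (or_comm _ _).1 hx; have hy' := (or_comm _ _).1 hy.
have nzx0 := critical_x0_neq0 hx hy hz crit.
have nzy0 := critical_x0_neq0 hy hx hz (critical_swapxy crit).
have nzx1 := critical_x0_neq0 hx' hy' hz (critical_swap01 crit).
have nzy1 := critical_x0_neq0 hy' hx' hz (critical_swapxy (critical_swap01 crit)).
rewrite /disc; have [z0E|nzz0] := eqVneq z0 0.
  subst z0; have nzz1 : z1 != 0 by case: hz; rewrite ?eqxx.
  by rewrite (critical_z0_eq0 nzx0 nzy0 nzy1 nzz1 crit) !(mulr0, mul0r).
have [z1E|nzz1] := eqVneq z1 0.
  subst z1.
  by rewrite (critical_z0_eq0 nzx0 nzy0 nzy1 nzz0 (critical_swapz crit)) !(mulr0, mul0r).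
have nz_ratio (u w : CC) : u != 0 -> w != 0 -> u / w != 0.
  by move=> nzu nzw; rewrite mulf_neq0 ?invr_neq0.
have := critical_affine (nz_ratio _ _ nzx1 nzx0) (nz_ratio _ _ nzy1 nzy0)
  (nz_ratio _ _ nzz1 nzz0) (critical_dehomogenize nzx0 nzy0 nzz0 crit).
by case=> ->; rewrite !(mulr0, mul0r).
Qed.

Lemma critical_of_b2_eq4 a b : b^+2 - 4 = 0 -> exists X Y, critical a b 1 X 1 Y 0 1.
Proof.
move=> hb; pose X := sqrtC ('i : CC).
have hX : X^+4 + 1 = 0.
  by rewrite (_ : X^+4 = (X^+2)^+2); [rewrite sqrtCK sqrCi; ring | ring].
have nzX : X != 0 by apply/eqP => X0; move/eqP: hX; rewrite X0 expr0n add0r oner_eq0.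
exists X, (- (b*X) / 2); do !split.
- by apply: (comb1_eq0 0 hb); rewrite /Fx0; field; field_side.
- by apply: (comb1_eq0 (- X / 2) hb); rewrite /Fx1; field; field_side.
- by apply: (comb1_eq0 (- X^+2 / 2) hb); rewrite /Fy0; field; field_side.
- by apply: (comb1_eq0 0 hb); rewrite /Fy1; field; field_side.
- by apply: (comb2_eq0 (X^+4 / 4) 1 hb hX); rewrite /Fz0; field; field_side.
- by apply: (comb1_eq0 (- X^+2 / 2) hb); rewrite /Fz1; field; field_side.
Qed.

Lemma critical_of_diff_factor a b : b^+2 - 2*a*b + a^+2 + 4 = 0 ->
  exists X Y Z, critical a b 1 X 1 Y 1 Z.
Proof.
move=> hab; pose c := (a + b) / 2; pose s := sqrtC (c^+2 - 4); pose r := (- c + s) / 2.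
have hs : s^+2 - (c^+2 - 4) = 0 by rewrite sqrtCK subrr.
have hr : r^+2 + c*r + 1 = 0 by apply: (comb1_eq0 (1/4) hs); rewrite /r; field; field_side.
pose X := sqrtC r.
have X2E : X^+2 = r by rewrite sqrtCK.
have hX : X^+4 + c*X^+2 + 1 = 0 by rewrite -hr -X2E; ring.
have nzX : X != 0 by apply/eqP => X0; move/eqP: hX; rewrite X0 !expr0n /= mulr0 !add0r oner_eq0.
exists X, X^-1, (- (a - b) / 2); do !split.
- by apply: (comb1_eq0 (X^-2/2 + b/4) hab); rewrite /Fx0; field; field_side.
- by apply: (comb1_eq0 (X/2 + b*X^-1/4) hab); rewrite /Fx1; field; field_side.
- by apply: (comb1_eq0 (X^+2/2 + b/4) hab); rewrite /Fy0; field; field_side.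
- by apply: (comb1_eq0 (X^-1/2 + b*X/4) hab); rewrite /Fy1; field; field_side.
- by apply: (comb1_eq0 (2*X^-2) hX); rewrite /Fz0 /c; field; field_side.
- by apply: (comb2_eq0 (2*(- (a - b)/2)*X^-2) (1/2) hX hab); rewrite /Fz1 /c; field; field_side.
Qed.

Lemma critical_of_plus_factor a b : a*b + 2*b + 2*a + 3 = 0 ->
  critical a b 1 1 1 1 1 (- (2 + a)).
Proof.
move=> h; do !split.
- by apply: (comb1_eq0 (2 + a) h); partials_ring.
- by apply: (comb1_eq0 (2 + a) h); partials_ring.
- by apply: (comb1_eq0 (2 + a) h); partials_ring.
- by apply: (comb1_eq0 (2 + a) h); partials_ring.
- by apply: (comb1_eq0 0 h); partials_ring.
- by apply: (comb1_eq0 (-2) h); partials_ring.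
Qed.

Lemma critical_of_minus_factor a b : a*b - 2*b - 2*a + 3 = 0 ->
  critical a b 1 (-1) 1 1 1 (- (2 - a)).
Proof.
move=> h; have h' : (- a)*(- b) + 2*(- b) + 2*(- a) + 3 = 0 by rewrite -h; ring.
by have := critical_oppx1 (critical_of_plus_factor h'); rewrite !opprK.
Qed.

Lemma disc_eq0_critical a b : disc a b = 0 ->
  exists x1 y1 z0 z1, (z0 != 0 \/ z1 != 0) /\ critical a b 1 x1 1 y1 z0 z1.
Proof.
have nz1 : (1 : CC) != 0 by rewrite oner_eq0.
move/eqP; rewrite !mulf_eq0 => /orP [/orP [/orP [/orP [] | ] | ] | ] /eqP h.
- have [X [Y crit]] := critical_of_b2_eq4 b h.
  by exists X, Y, 1, 0; split; [left | exact: critical_swapz crit].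
- have [X [Y crit]] := critical_of_b2_eq4 a h.
  by exists X, Y, 0, 1; split; [right | ].
- by exists (-1), 1, 1, (- (2 - a)); split; [left | exact: critical_of_minus_factor].
- by exists 1, 1, 1, (- (2 + a)); split; [left | exact: critical_of_plus_factor].
- have [X [Y [Z crit]]] := critical_of_diff_factor h.
  by exists X, Y, 1, Z; split; [left | ].
Qed.

Definition point6 (x0 x1 y0 y1 z0 z1 : CC) : 'I_6 -> CC :=
  fun i => nth 0 [:: x0; x1; y0; y1; z0; z1] i.

Lemma singular_point_Fab_point6 a b x1 y1 z0 z1 : (z0 != 0 \/ z1 != 0) ->
  critical a b 1 x1 1 y1 z0 z1 -> singular_point (Fab a b) (point6 1 x1 1 y1 z0 z1).
Proof.
move=> hz crit; apply/singular_point_FabE.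
rewrite /proj_point /point6 !inordK //= oner_eq0.
by split=> //; split; [left | split; [left | ]].
Qed.

Theorem proposition4p1 (a b : CC) :
  smooth_hypersurface (Fab a b) <->
  (a ^+ 2 - 4) * (b ^+ 2 - 4) * (a * b - 2 * b - 2 * a + 3)
    * (a * b + 2 * b + 2 * a + 3) * (b ^+ 2 - 2 * a * b + a ^+ 2 + 4) != 0.
Proof.
rewrite -/(disc a b); split=> [smooth | nz_disc [v sing]].
  apply/eqP => /disc_eq0_critical [x1 [y1 [z0 [z1 [hz crit]]]]].
  by apply: smooth; exists (point6 1 x1 1 y1 z0 z1); exact: singular_point_Fab_point6.
move/singular_point_FabE: sing => [[hx [hy hz]] crit].
by rewrite (critical_disc_eq0 hx hy hz crit) eqxx in nz_disc.
Qed.
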